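(* Fix $k\in\mathbb{N}$ with $k\ge2$ and let $S=\mathbb{N}_0\cup\mathbb{R}_{\ge k}$. Then $S$ is a positive semiring that is a BFS but not an FFS.
   Context: A positive semiring is a subset of $\mathbb{R}_{\ge0}$ containing $0$ and $1$ and closed under the usual addition and multiplication. For such $S$, $S^*=S\setminus\{0\}$ is a multiplicative monoid; an atom is a nonunit $a\in S^*$ with $a=bc$ ($b,c\in S^*$) forcing $b$ or $c$ to be a unit; $S$ is atomic if every nonunit of $S^*$ is a finite product of atoms. $S$ is a BFS if it is atomic and every nonunit has a finite set of factorization lengths; $S$ is an FFS if it is atomic and every element of $S^*$ has only finitely many factorizations into atoms up to order and associates. *)

From Stdlib Require Import Reals List Permutation.
Open Scope R_scope.

Definition positive_semiring (S : R -> Prop) : Prop :=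
  (forall x, S x -> 0 <= x) /\ S 0 /\ S 1 /\
  (forall x y, S x -> S y -> S (x + y)) /\
  (forall x y, S x -> S y -> S (x * y)).

Definition Sstar (S : R -> Prop) (x : R) : Prop := S x /\ x <> 0.

Definition sunit (S : R -> Prop) (u : R) : Prop :=
  Sstar S u /\ exists v, Sstar S v /\ u * v = 1.

Definition atom (S : R -> Prop) (a : R) : Prop :=
  Sstar S a /\ ~ sunit S a /\
  forall b c, Sstar S b -> Sstar S c -> a = b * c -> sunit S b \/ sunit S c.

Definition lprod (l : list R) : R := fold_right Rmult 1 l.

Definition factorization (S : R -> Prop) (x : R) (l : list R) : Prop :=
  Forall (atom S) l /\ lprod l = x.

Definition atomic (S : R -> Prop) : Prop :=
  forall x, Sstar S x -> ~ sunit S x -> exists l, factorization S x l.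

Definition BFS (S : R -> Prop) : Prop :=
  atomic S /\
  forall x, Sstar S x -> ~ sunit S x ->
    exists L : list nat,
      forall l, factorization S x l -> In (length l) L.

Definition associated (S : R -> Prop) (a b : R) : Prop :=
  exists u, sunit S u /\ a = u * b.

Definition fact_equiv (S : R -> Prop) (l1 l2 : list R) : Prop :=
  exists l2', Permutation l2 l2' /\ Forall2 (associated S) l1 l2'.

Definition FFS (S : R -> Prop) : Prop :=
  atomic S /\
  forall x, Sstar S x ->
    exists F : list (list R),
      forall l, factorization S x l ->
        exists l', In l' F /\ fact_equiv S l l'.

Definition S_k (k : nat) (x : R) : Prop :=
  (exists n : nat, x = INR n) \/ INR k <= x.

From Stdlib Require Import Reals List Permutation Lra Lia Classical.
Open Scope R_scope.

(* The only unit of S = N_0 ∪ R_{>=k} is 1 and every other element of S^* is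
   at least 2. Whenever the nonunits are bounded below by some r > 1, a
   product of n atoms is at least r^n: splitting a non-atom x gives factors
   at most x / r, so factorizations exist, and their lengths are bounded.
   Finiteness fails because S has a continuum of atoms: every a in (k, k+1)
   is one, as it is neither an integer nor a product of two elements >= 2.
   Hence with c = k + 1/2, the element c^2 = a * (c^2/a) has a different
   two-atom factorization for each a in (c, c + 1/4), and with trivial units
   no two of them agree up to order and associates. *)

Lemma lprod_app l1 l2 : lprod (l1 ++ l2) = lprod l1 * lprod l2.
Proof. induction l1 as [|a l1 IH]; simpl; [ring|rewrite IH; ring]. Qed.

Section BoundedNonunits.

Variables (S : R -> Prop) (r : R).
Hypothesis r_gt1 : 1 < r.
Hypothesis nonunit_ge : forall x, Sstar S x -> ~ sunit S x -> r <= x.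

Lemma atom_ge a : atom S a -> r <= a.
Proof. intros [Ha [Hu _]]; exact (nonunit_ge a Ha Hu). Qed.

Lemma lprod_atoms_ge l : Forall (atom S) l -> r ^ length l <= lprod l.
Proof.
  induction 1 as [|a l Ha _ IH]; simpl; [lra|].
  pose proof (atom_ge a Ha); pose proof (pow_le r (length l) ltac:(lra)).
  nra.
Qed.

Lemma factorization_exists_le N :
  forall x, x <= r ^ N -> Sstar S x -> ~ sunit S x ->
  exists l, factorization S x l.
Proof.
  induction N as [|N IH]; intros x Hx Hs Hu; pose proof (nonunit_ge x Hs Hu).
  - simpl in Hx; lra.
  - destruct (classic (exists b c, Sstar S b /\ Sstar S c /\ x = b * c /\
                                   ~ sunit S b /\ ~ sunit S c))
      as [[b [c [Hb [Hc [E [Hbu Hcu]]]]]]|Hirr].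
    + pose proof (nonunit_ge b Hb Hbu); pose proof (nonunit_ge c Hc Hcu).
      simpl in Hx.
      destruct (IH b) as [lb [Fb Pb]]; [nra|exact Hb|exact Hbu|].
      destruct (IH c) as [lc [Fc Pc]]; [nra|exact Hc|exact Hcu|].
      exists (lb ++ lc); split; [now apply Forall_app|].
      rewrite lprod_app, Pb, Pc, E; reflexivity.
    + exists (x :: nil); split; [|simpl; lra].
      constructor; [|constructor].
      split; [exact Hs|split; [exact Hu|]].
      intros b c Hb Hc E; apply NNPP; intro Hn; apply Hirr.
      exists b, c; split; [exact Hb|split; [exact Hc|split; [exact E|]]].
      split; intro; apply Hn; auto.
Qed.

Lemma pow_exceeds x : exists N, x < r ^ N.
Proof.
  destruct (Pow_x_infinity r ltac:(rewrite Rabs_pos_eq; lra) (x + 1)) as [N HN].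
  exists N; specialize (HN N (le_n N)).
  rewrite Rabs_pos_eq in HN by (apply pow_le; lra); lra.
Qed.

Lemma atomic_of_nonunits_bounded : atomic S.
Proof.
  intros x Hs Hu; destruct (pow_exceeds x) as [N HN].
  apply (factorization_exists_le N); auto; lra.
Qed.

Lemma BFS_of_nonunits_bounded : BFS S.
Proof.
  split; [exact atomic_of_nonunits_bounded|].
  intros x _ _; destruct (pow_exceeds x) as [N HN].
  exists (seq 0 N); intros l [Hl <-].
  apply in_seq; split; [lia|].
  destruct (Nat.lt_ge_cases (length l) N) as [|Hge]; [lia|].
  pose proof (lprod_atoms_ge l Hl); pose proof (Rle_pow r N _ ltac:(lra) Hge).
  lra.
Qed.

End BoundedNonunits.

Section TrivialUnits.

Variable S : R -> Prop.
Hypothesis sunit_eq1 : forall u, sunit S u -> u = 1.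

Lemma fact_equiv_Permutation l1 l2 : fact_equiv S l1 l2 -> Permutation l1 l2.
Proof.
  intros [l2' [P F]]; replace l1 with l2'; [now apply Permutation_sym|].
  clear P.
  induction F as [|a b l1 l2' [u [Hu ->]] _ IH]; [reflexivity|].
  rewrite (sunit_eq1 u Hu), Rmult_1_l, IH; reflexivity.
Qed.

Lemma FFS_atoms_of_factorizations_finite :
  FFS S -> forall x, Sstar S x ->
  exists A, forall l a, factorization S x l -> In a l -> In a A.
Proof.
  intros [_ HF] x Hx; destruct (HF x Hx) as [F HFx].
  exists (concat F); intros l a Hl Ha.
  destruct (HFx l Hl) as [l' [Hl' He]].
  apply in_concat; exists l'; split; [exact Hl'|].
  exact (Permutation_in a (fact_equiv_Permutation l l' He) Ha).
Qed.

End TrivialUnits.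

Lemma exists_notin_interval (l : list R) p q :
  p < q -> exists a, p < a < q /\ ~ In a l.
Proof.
  revert p q; induction l as [|h t IH]; intros p q Hpq.
  - exists ((p + q) / 2); split; [lra|auto].
  - destruct (Rle_dec h ((p + q) / 2)).
    + destruct (IH ((p + q) / 2) q) as [a [Ha Hn]]; [lra|].
      exists a; split; [lra|]; intros [E|E]; [lra|auto].
    + destruct (IH p ((p + q) / 2)) as [a [Ha Hn]]; [lra|].
      exists a; split; [lra|]; intros [E|E]; [lra|auto].
Qed.

Lemma positive_semiring_S_k k : positive_semiring (S_k k).
Proof.
  pose proof (pos_INR k).
  repeat split.
  - intros x [[n ->]|Hx]; [apply pos_INR|lra].
  - left; exists 0%nat; reflexivity.
  - left; exists 1%nat; reflexivity.
  - intros x y [[n ->]|Hx] [[m ->]|Hy].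
    + left; exists (n + m)%nat; symmetry; apply plus_INR.
    + right; pose proof (pos_INR n); lra.
    + right; pose proof (pos_INR m); lra.
    + right; lra.
  - intros x y [[n ->]|Hx] [[m ->]|Hy].
    + left; exists (n * m)%nat; symmetry; apply mult_INR.
    + destruct n as [|n]; [left; exists 0%nat; simpl; ring|right].
      rewrite S_INR; pose proof (Rmult_le_pos _ y (pos_INR n) ltac:(lra)); lra.
    + destruct m as [|m]; [left; exists 0%nat; simpl; ring|right].
      rewrite S_INR; pose proof (Rmult_le_pos x _ ltac:(lra) (pos_INR m)); lra.
    + right; destruct k as [|k']; [simpl in *; nra|].
      pose proof (le_INR 1 (S k') ltac:(lia)); simpl in *; nra.
Qed.

Section S_k.

Variable k : nat.
Hypothesis k_ge2 : (2 <= k)%nat.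

Lemma INR_k_ge2 : 2 <= INR k.
Proof. apply (le_INR 2); exact k_ge2. Qed.

Lemma S_k_star_cases y :
  Sstar (S_k k) y -> y = 1 \/ INR k <= y \/ exists n, y = INR n /\ 2 <= INR n.
Proof.
  intros [[[n ->]|Hy] Hn]; [|now right; left].
  destruct n as [|[|n]]; [simpl in Hn; lra|now left|].
  right; right; exists (S (S n)); split; [reflexivity|].
  apply (le_INR 2); lia.
Qed.

Lemma S_k_star_ge1 y : Sstar (S_k k) y -> 1 <= y.
Proof.
  intro H; pose proof INR_k_ge2.
  destruct (S_k_star_cases y H) as [->|[?|[n [-> ?]]]]; lra.
Qed.

Lemma sunit_S_k u : sunit (S_k k) u <-> u = 1.
Proof.
  split.
  - intros [Hu [v [Hv E]]].
    pose proof (S_k_star_ge1 u Hu); pose proof (S_k_star_ge1 v Hv); nra.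
  - intros ->; assert (H1 : Sstar (S_k k) 1)
      by (split; [left; exists 1%nat; reflexivity|lra]).
    split; [exact H1|exists 1; split; [exact H1|ring]].
Qed.

Lemma S_k_nonunit_ge2 x : Sstar (S_k k) x -> ~ sunit (S_k k) x -> 2 <= x.
Proof.
  intros H Hu; pose proof INR_k_ge2; rewrite sunit_S_k in Hu.
  destruct (S_k_star_cases x H) as [->|[?|[n [-> ?]]]]; lra.
Qed.

Lemma atom_S_k_between a : INR k < a < INR k + 1 -> atom (S_k k) a.
Proof.
  intros Ha; pose proof INR_k_ge2.
  assert (not_nat : forall n, a <> INR n).
  { intros n ->.
    assert (k < n)%nat by (apply INR_lt; lra).
    assert (INR (S k) <= INR n) by (apply le_INR; lia).
    rewrite S_INR in *; lra. }
  split; [split; [right|]; lra|split; [rewrite sunit_S_k; lra|]].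
  intros b c Hb Hc E; rewrite !sunit_S_k.
  destruct (S_k_star_cases b Hb) as [->|[Hb'|[n [-> Hn]]]]; [now left| |];
    (destruct (S_k_star_cases c Hc) as [->|[Hc'|[m [-> Hm]]]]; [now right| |]);
    exfalso; try nra.
  apply (not_nat (n * m)%nat); rewrite mult_INR; exact E.
Qed.

Lemma S_k_not_FFS : ~ FFS (S_k k).
Proof.
  intro HFFS; pose proof INR_k_ge2.
  set (c := INR k + / 2); set (x := c * c).
  assert (Hc : 2 < c) by (unfold c; lra).
  destruct (FFS_atoms_of_factorizations_finite (S_k k)
              (fun u => proj1 (sunit_S_k u)) HFFS x) as [A HA].
  { split; [right|]; unfold x, c; nra. }
  destruct (exists_notin_interval A c (c + / 4)) as [a [Ha HaA]]; [lra|].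
  set (b := x / a).
  assert (Hb : b * a = x) by (unfold b; field; lra).
  assert (b < c) by (unfold x in Hb; nra).
  assert (INR k < b) by (unfold x, c in Hb; unfold c in Ha; nra).
  apply HaA, (HA (a :: b :: nil)); [|now left].
  split; [|simpl; rewrite <- Hb; ring].
  constructor; [|constructor; [|constructor]];
    apply atom_S_k_between; unfold c in *; lra.
Qed.

End S_k.

Theorem mainTheorem8 (k : nat) (hk : (2 <= k)%nat) :
  positive_semiring (S_k k) /\ BFS (S_k k) /\ ~ FFS (S_k k).
Proof.
  split; [apply positive_semiring_S_k|split].
  - apply (BFS_of_nonunits_bounded _ 2); [lra|].
    exact (S_k_nonunit_ge2 k hk).
  - exact (S_k_not_FFS k hk).
Qed.
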